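(* For any $k,\Delta \in \mathbb{N}$, there exists an $L\in\mathbb{N}$ such that the following holds. If $G$ is a finite graph with $f(G) < k$ and maximum degree at most $\Delta$, then $G$ contains at most $L$ vertices of degree at least $k-1$.
   Context: All graphs are finite and simple. For a graph $G$, $f(G)$ denotes the largest integer $k$ for which $G$ contains an induced subgraph in which exactly $k$ distinct values occur among the vertex degrees (i.e., an induced subgraph with $k$ distinct degrees). *)

From mathcomp Require Import all_boot.
Set Implicit Arguments. Unset Strict Implicit. Unset Printing Implicit Defensive.

Definition simple_graph (T : finType) (e : rel T) : Prop :=
  symmetric e /\ irreflexive e.

Definition ideg (T : finType) (e : rel T) (S : {set T}) (v : T) : nat :=
  #|[set u in S | e v u]|.

Definition deg (T : finType) (e : rel T) (v : T) : nat := ideg e [set: T] v.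

Definition num_distinct_degrees (T : finType) (e : rel T) (S : {set T}) : nat :=
  size (undup [seq ideg e S v | v <- enum S]).

Definition f_distinct (T : finType) (e : rel T) : nat :=
  \max_(S : {set T}) num_distinct_degrees e S.

(* maximum degree of G (0 for the empty graph) *)
Definition max_deg (T : finType) (e : rel T) : nat :=
  \max_(v : T) deg e v.

From mathcomp Require Import all_boot.
From mathcomp Require Import zify.
Set Implicit Arguments. Unset Strict Implicit. Unset Printing Implicit Defensive.

(* Suppose more than (k-1)(Delta+1)^2 vertices have degree at least k-1.  Every
   closed neighbourhood has at most Delta+1 vertices, so a vertex meets at most
   (Delta+1)^2 closed neighbourhoods, and a greedy choice yields k such vertices
   x_0, ..., x_(k-1) with pairwise disjoint closed neighbourhoods.  Keeping x_i
   together with i of its neighbours, for every i, induces a subgraph in which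
   x_i has degree exactly i: no kept vertex is adjacent to two distinct x_i.
   Hence f(G) >= k. *)

Lemma card_bigcup_le (I T : finType) (A : {pred I}) (F : I -> {set T}) :
  #|\bigcup_(i in A) F i| <= \sum_(i in A) #|F i|.
Proof.
apply: (big_ind2 (fun (X : {set T}) n => #|X| <= n)) => [|X m Y n leX leY|//].
  by rewrite cards0.
exact: leq_trans (leq_card_setU X Y).1 (leq_add leX leY).
Qed.

Section Packing.

Variables (T : finType) (R : rel T) (d : nat).
Hypotheses (R_refl : reflexive R) (R_sym : symmetric R).
Hypothesis card_R : forall x, #|[set y | R x y]| <= d.

Lemma exists_sparse_subset m (H : {set T}) : m * d < #|H| ->
  exists P : {set T}, [/\ P \subset H, #|P| = m.+1 &
    {in P &, forall x y, x != y -> ~~ R x y}].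
Proof.
elim: m H => [|m IH] H ltH; have /card_gt0P[v vH] : 0 < #|H| by lia.
  exists [set v]; split; rewrite ?sub1set ?cards1 //.
  by move=> x y /set1P-> /set1P->; rewrite eqxx.
set H' := H :\: [set y | R v y].
have ltH' : m * d < #|H'|.
  have := cardsID [set y | R v y] H; rewrite -/H'.
  have := subset_leq_card (subsetIr H [set y | R v y]).
  have := card_R v; lia.
have [P [sPH' cardP farP]] := IH H' ltH'.
have farv x : x \in P -> ~~ R v x.
  by move/(subsetP sPH'); rewrite !inE => /andP[].
have vNP : v \notin P := contraL (farv v) (R_refl v).
exists (v |: P); split.
- by rewrite subUset sub1set vH (subset_trans sPH') ?subsetDl.
- by rewrite cardsU1 vNP cardP.
move=> x y /setU1P[->|xP] /setU1P[->|yP]; rewrite ?eqxx //.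
- by move=> _; apply: farv.
- by move=> _; rewrite R_sym farv.
- exact: farP.
Qed.

End Packing.

Section Graph.

Variables (T : finType) (e : rel T).

Definition nbr (v : T) : {set T} := [set u | e v u].

Definition cnbr (v : T) : {set T} := v |: nbr v.

Definition near (x y : T) : bool := ~~ [disjoint cnbr x & cnbr y].

Definition scattered (P : {set T}) : Prop :=
  {in P &, forall x y, x != y -> ~~ near x y}.

Lemma card_nbr v : #|nbr v| = deg e v.
Proof. by apply: eq_card => u; rewrite !inE. Qed.

Lemma near_refl : reflexive near.
Proof. by move=> x; apply/pred0Pn; exists x; rewrite /= !setU11. Qed.

Lemma near_sym : symmetric near.
Proof. by move=> x y; rewrite /near disjoint_sym. Qed.

Lemma card_near D : symmetric e -> (forall v, deg e v <= D) ->
  forall x, #|[set y | near x y]| <= D.+1 ^ 2.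
Proof.
move=> sym degD x.
have card_cnbr v : #|cnbr v| <= D.+1.
  by rewrite (leq_trans (leq_card_setU _ _).1) // cards1 card_nbr add1n ltnS degD.
have sub : [set y | near x y] \subset \bigcup_(w in cnbr x) cnbr w.
  apply/subsetP => y; rewrite inE => /pred0Pn[w /andP[wx wy]].
  apply/bigcupP; exists w => //; move: wy; rewrite !inE (eq_sym w) sym.
  by case/orP=> ->; rewrite ?orbT.
rewrite (leq_trans (subset_leq_card sub)) // (leq_trans (card_bigcup_le _ _)) //.
rewrite -mulnn (leq_trans (leq_sum _ (fun w _ => card_cnbr w))) //.
by rewrite sum_nat_const leq_mul2r card_cnbr orbT.
Qed.

Lemma ideg_scattered (P : {set T}) (A : T -> {set T}) :
  simple_graph e -> scattered P -> {in P, forall x, A x \subset nbr x} ->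
  {in P, forall x, ideg e (P :|: \bigcup_(y in P) A y) x = #|A x|}.
Proof.
move=> [sym irr] farP sAnbr x xP; apply: eq_card => u.
rewrite !inE; apply/idP/idP => [|uA]; last first.
  have /[!inE] -> := subsetP (sAnbr x xP) u uA.
  by rewrite andbT; apply/orP; right; apply/bigcupP; exists x.
(* u lies in [cnbr x], which meets no other [cnbr y] with y in P. *)
case/andP=> /orP[uP|/bigcupP[y yP uAy]] exu.
  have nux : u != x by apply: contraTneq exu => ->; rewrite irr.
  have := disjointFr (negbNE (farP u x uP xP nux)) (setU11 u (nbr u)).
  by rewrite !inE exu orbT.
have [<- //|nyx] := eqVneq y x.
have uy : u \in cnbr y by rewrite setU1r // (subsetP (sAnbr y yP)).
have := disjointFr (negbNE (farP y x yP xP nyx)) uy.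
by rewrite !inE exu orbT.
Qed.

Lemma leq_num_distinct_degrees (S P : {set T}) :
  P \subset S -> {in P &, injective (ideg e S)} -> #|P| <= num_distinct_degrees e S.
Proof.
move=> sPS injP; rewrite cardE -(size_map (ideg e S)).
apply: uniq_leq_size => [|_ /mapP[x xP ->]].
  by rewrite map_inj_in_uniq ?enum_uniq // => x y; rewrite !mem_enum; apply: injP.
by rewrite mem_undup map_f // mem_enum (subsetP sPS) // -mem_enum.
Qed.

Lemma scattered_f_distinct (P : {set T}) : simple_graph e -> scattered P ->
  {in P, forall x, #|P|.-1 <= deg e x} -> #|P| <= f_distinct e.
Proof.
move=> ge farP degP; set s := enum P.
pose A x := [set u in take (index x s) (enum (nbr x))].
have cardA : {in P, forall x, #|A x| = index x s}.
  move=> x xP; rewrite cardsE (card_uniqP _) ?take_uniq ?enum_uniq //.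
  rewrite size_takel // -cardE card_nbr (leq_trans _ (degP x xP)) //.
  have : index x s < #|P| by rewrite cardE index_mem mem_enum.
  by case: #|P|.
have sAnbr : {in P, forall x, A x \subset nbr x}.
  by move=> x _; apply/subsetP => u; rewrite inE => /mem_take; rewrite mem_enum.
apply: leq_trans (leq_bigmax (P :|: \bigcup_(y in P) A y)).
apply: leq_num_distinct_degrees; first exact: subsetUl.
move=> x y xP yP; rewrite !ideg_scattered // !cardA // => eqxy.
by rewrite -(nth_index x (_ : x \in s)) ?eqxy ?nth_index ?mem_enum.
Qed.

End Graph.

Theorem proposition2p2 :
  forall k Delta : nat, exists L : nat,
    forall (T : finType) (e : rel T),
      simple_graph e ->
      f_distinct e < k ->
      max_deg e <= Delta ->
      #|[set v : T | k.-1 <= deg e v]| <= L.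
Proof.
move=> k D; exists (k.-1 * D.+1 ^ 2) => T e ge ltfk maxD.
have degD v : deg e v <= D := leq_trans (leq_bigmax v) maxD.
rewrite leqNgt; apply/negP.
have card_near_e := card_near ge.1 degD.
case/(exists_sparse_subset (@near_refl _ e) (@near_sym _ e) card_near_e).
move=> P [sPH cardP farP].
have degP : {in P, forall x, #|P|.-1 <= deg e x}.
  by move=> x /(subsetP sPH); rewrite inE cardP.
have := scattered_f_distinct ge farP degP.
by rewrite cardP leqNgt (leq_trans ltfk (leqSpred k)).
Qed.
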